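(* Let $\theta_0\in\mathbb{R}$ and let $\hat\theta_u,\hat\theta_b$ be real random variables with finite second moments such that $\mathbb{E}[\hat\theta_u]=\theta_0$ and $\mathbb{E}[\hat\theta_b]=\theta_0+\mu$ for some (arbitrary) $\mu\in\mathbb{R}$. Write $\sigma^2_u=\mathrm{Var}(\hat\theta_u)$, $\sigma^2_b=\mathrm{Var}(\hat\theta_b)$, $\sigma_{bu}=\mathrm{Cov}(\hat\theta_b,\hat\theta_u)$, and assume $\sigma^2_u>0$ and $\sigma^2_u+\sigma^2_b-2\sigma_{bu}>0$. Suppose the variances and covariance are known, and define $$\hat\lambda=\frac{\sigma^2_u-\sigma_{bu}}{(\hat\theta_u-\hat\theta_b)^2+\sigma^2_u+\sigma^2_b-2\sigma_{bu}},\qquad \hat\theta_{\hat\lambda}=\hat\lambda\hat\theta_b+(1-\hat\lambda)\hat\theta_u.$$ Let $c=\sigma_b/\sigma_u$ and $\rho=\sigma_{bu}/\sqrt{\sigma^2_u\sigma^2_b}$, with $\rho=0$ if $\sigma^2_b=0$. Then $$\mathbb{E}\big[(\hat\theta_{\hat\lambda}-\theta_0)^2\big]\le \sigma^2_u\left(1+\frac12\,\frac{|1-\rho c|}{\sqrt{1-2\rho c+c^2}}\right)^2 .$$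
   Context: $\hat\theta_u$ is an unbiased estimator of $\theta_0$ and $\hat\theta_b$ is a possibly biased estimator with unknown bias $\mu$; $\hat\theta_{\hat\lambda}$ is the combination estimator. $\sigma_u,\sigma_b$ denote the nonnegative square roots of $\sigma^2_u,\sigma^2_b$. *)

From HB Require Import structures.
From mathcomp Require Import all_boot all_order all_algebra.
From mathcomp Require Import all_classical all_reals all_analysis.
Set Implicit Arguments. Unset Strict Implicit. Unset Printing Implicit Defensive.
Import Order.TTheory GRing.Theory Num.Theory.
Local Open Scope ring_scope.

Definition var_r d (T : measurableType d) (R : realType) (P : probability T R)
  (X : T -> R) : R := fine ('V_P[X])%E.
Definition cov_r d (T : measurableType d) (R : realType) (P : probability T R)
  (X Y : T -> R) : R := fine (covariance P X Y).

Definition lambda_hat (R : realType) (T : Type) (su2 sb2 sbu : R)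
  (tu tb : T -> R) : T -> R :=
  fun w => (su2 - sbu) / ((tu w - tb w) ^+ 2 + su2 + sb2 - 2 * sbu).

Definition combo_est (R : realType) (T : Type) (su2 sb2 sbu : R)
  (tu tb : T -> R) : T -> R :=
  fun w => lambda_hat su2 sb2 sbu tu tb w * tb w
           + (1 - lambda_hat su2 sb2 sbu tu tb w) * tu w.

Definition ratio_c (R : realType) (su2 sb2 : R) : R :=
  Num.sqrt sb2 / Num.sqrt su2.

Definition corr_rho (R : realType) (su2 sb2 sbu : R) : R :=
  if sb2 == 0 then 0 else sbu / Num.sqrt (su2 * sb2).

From HB Require Import structures.
From mathcomp Require Import all_boot all_order all_algebra.
From mathcomp Require Import all_classical all_reals all_analysis.
From mathcomp Require Import measurable_realfun ring lra.
Import Order.TTheory GRing.Theory Num.Theory.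
Import numFieldNormedType.Exports.
Local Open Scope ring_scope.

(* Write v := su2 + sb2 - 2 sbu for the variance of tu - tb.  Then
   theta_lambda - theta0 = (tu - theta0) + g (tb - tu) with
   g y = (su2 - sbu) y / (y^2 + v), and AM-GM bounds |g| uniformly by
   K := |su2 - sbu| / (2 sqrt v), whatever the bias.  For |y| <= K and
   s := sqrt su2 we have (x + y)^2 <= (1 + K/s) x^2 + K s + K^2, so the mean
   squared error is at most (1 + K/s) s^2 + K s + K^2 = (s + K)^2, and
   K/s = |1 - rho c| / (2 sqrt (1 - 2 rho c + c^2)). *)

Definition shrink {R : fieldType} (a v y : R) : R := a / (y ^+ 2 + v) * y.

Lemma norm_shrink_le (R : rcfType) (a v y : R) : 0 < v ->
  `|shrink a v y| <= `|a| / (2 * Num.sqrt v).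
Proof.
move=> v0; rewrite /shrink.
have sv : 0 < Num.sqrt v by rewrite sqrtr_gt0.
have yv : 0 < y ^+ 2 + v by rewrite ltr_wpDl ?sqr_ge0.
have am_gm : 2 * `|y| * Num.sqrt v <= y ^+ 2 + v.
  have := sqr_ge0 (`|y| - Num.sqrt v).
  by rewrite sqrrB real_normK ?num_real // (sqr_sqrtr (ltW v0)); lra.
rewrite !normrM normfV (gtr0_norm yv) ler_pdivlMr ?mulr_gt0 //.
have -> : `|a| / (y ^+ 2 + v) * `|y| * (2 * Num.sqrt v)
    = `|a| * ((2 * `|y| * Num.sqrt v) / (y ^+ 2 + v)).
  by field; rewrite gt_eqF.
by rewrite ler_piMr // ler_pdivrMr // mul1r.
Qed.

Lemma shrink_continuous (R : realType) (a v : R) : 0 < v ->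
  continuous (shrink a v).
Proof.
move=> v0 y; have yv : y ^+ 2 + v != 0 by rewrite gt_eqF // ltr_wpDl ?sqr_ge0.
apply: cvgM; last exact: cvg_id.
apply: cvgM; first exact: cvg_cst.
by apply: cvgV => //; apply: cvgD; [exact: exprn_continuous | exact: cvg_cst].
Qed.

Lemma sqrrD_le_of_norm_le (R : realFieldType) (x y s K : R) : 0 < s ->
  `|y| <= K -> (x + y) ^+ 2 <= (1 + K / s) * x ^+ 2 + (K * s + K ^+ 2).
Proof.
move=> s0 yK; have K0 : 0 <= K := le_trans (normr_ge0 y) yK.
have xy : x * y <= `|x| * K by rewrite (le_trans (ler_norm _)) // normrM ler_wpM2l.
have yy : y ^+ 2 <= K ^+ 2.
  by rewrite -real_normK ?num_real // lerXn2r // nnegrE.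
(* AM-GM: 2 |x| K <= (K/s) x^2 + K s *)
have : 0 <= K / s * (`|x| - s) ^+ 2 by rewrite mulr_ge0 ?divr_ge0 ?sqr_ge0 // ltW.
have -> : K / s * (`|x| - s) ^+ 2 = K / s * x ^+ 2 - 2 * `|x| * K + K * s.
  by rewrite -[x ^+ 2]real_normK ?num_real //; field; rewrite gt_eqF.
by rewrite sqrrD; lra.
Qed.

Lemma combo_est_shrinkE {T : Type} {R : realType} (su2 sb2 sbu : R)
    (tu tb : T -> R) (w : T) :
  combo_est su2 sb2 sbu tu tb w
  = tu w + shrink (su2 - sbu) (su2 + sb2 - 2 * sbu) (tb w - tu w).
Proof.
rewrite /combo_est /lambda_hat /shrink.
have -> : (tu w - tb w) ^+ 2 + su2 + sb2 - 2 * sbu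
    = (tb w - tu w) ^+ 2 + (su2 + sb2 - 2 * sbu) by ring.
by ring.
Qed.

Lemma measurable_combo_est d (T : measurableType d) (R : realType)
    (su2 sb2 sbu : R) (tu tb : T -> R) :
  0 < su2 + sb2 - 2 * sbu ->
  measurable_fun setT tu -> measurable_fun setT tb ->
  measurable_fun setT (combo_est su2 sb2 sbu tu tb).
Proof.
move=> v0 mtu mtb; rewrite (funext (combo_est_shrinkE su2 sb2 sbu tu tb)).
apply: measurable_funD => //; apply: measurableT_comp; last exact: measurable_funB.
by apply: continuous_measurable_fun; exact: shrink_continuous.
Qed.

Section variance_bounds.
Context {d} {T : measurableType d} {R : realType} {P : probability T R}.

Lemma var_r_ge0 (X : T -> R) : 0 <= var_r P X.
Proof. exact/fine_ge0/variance_ge0. Qed.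

Lemma cov_r_eq0_of_var_r_eq0 {X Y : T -> R} :
  X \in Lfun P 2%:E -> Y \in Lfun P 2%:E -> var_r P X = 0 -> cov_r P X Y = 0.
Proof.
move=> X2 Y2 VX0.
have VX : 'V_P[X] = 0%E.
  by rewrite -(fineK (variance_fin_num X2)) -/(var_r P X) VX0.
have Pfin : P setT \is a fin_num := fin_num_measure P _ measurableT.
have cov_le := covariance_le X2 Y2.
rewrite VX sqrte0 mul0e in cov_le.
have NX2 : (\- X)%R \in Lfun P 2%:E by rewrite rpredN.
have cov_ge := covariance_le NX2 Y2.
have X1 := Lfun_subset12 Pfin X2; have Y1 := Lfun_subset12 Pfin Y2.
have XY1 := Lfun2_mul_Lfun1 X2 Y2.
rewrite varianceN // VX sqrte0 mul0e covarianceNl // oppe_le0 in cov_ge.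
rewrite /cov_r (_ : covariance P X Y = 0%E) //.
by apply/eqP; rewrite eq_le cov_le cov_ge.
Qed.

Lemma expectation_le_variance_affine {X f : T -> R} {m a b : R} :
  X \in Lfun P 2%:E -> ('E_P[X] = m%:E)%E ->
  measurable_fun setT f -> (forall w, 0 <= f w) ->
  (forall w, f w <= a * (X w - m) ^+ 2 + b) ->
  ('E_P[f] <= (a * var_r P X + b)%:E)%E.
Proof.
move=> X2 EX mf f0 f_le.
pose Y := (X \- cst m)%R.
have Y2 : Y \in Lfun P 2%:E.
  by rewrite rpredB //; [rewrite lee1n | move=> ?; exact: Lfun_cst].
have /[!inE] mY := sub_Lfun_mfun Y2.
have EYY : ('E_P[Y \* Y] = (var_r P X)%:E)%E.
  by rewrite /var_r fineK ?variance_fin_num // /variance covariance.unlock EX.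
pose G := ((a \o* (Y \* Y)) \+ cst b)%R.
have fG w : f w <= G w by rewrite /G /Y /= mulrC -expr2; exact: f_le.
have mG : measurable_fun setT G.
  by apply: measurable_funD => //; apply: measurable_funM => //; exact: measurable_funM.
have G0 w : 0 <= G w := le_trans (f0 w) (fG w).
apply: le_trans (expectation_le mf mG f0 G0 (aeW _ fG)) _.
rewrite expectationD ?Lfun_cst //; last by apply: Lfun_scale => //; exact: Lfun2_mul_Lfun1.
by rewrite expectationZl ?Lfun2_mul_Lfun1 // EYY expectation_cst.
Qed.

End variance_bounds.

Lemma ratio_c_sqr (R : realType) (su2 sb2 : R) : 0 <= su2 -> 0 <= sb2 ->
  ratio_c su2 sb2 ^+ 2 = sb2 / su2.
Proof. by move=> su0 sb0; rewrite /ratio_c expr_div_n !sqr_sqrtr. Qed.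

Lemma corr_rho_mul_ratio_c (R : realType) (su2 sb2 sbu : R) :
  0 < su2 -> 0 <= sb2 -> (sb2 = 0 -> sbu = 0) ->
  corr_rho su2 sb2 sbu * ratio_c su2 sb2 = sbu / su2.
Proof.
move=> su0 sb0 sbu0; rewrite /corr_rho /ratio_c.
case: ifPn => [/eqP sb_eq0|sb_neq0].
  by rewrite sbu0 // !mul0r.
have sb_gt0 : 0 < Num.sqrt sb2 by rewrite sqrtr_gt0 lt_neqAle eq_sym sb_neq0.
have su_gt0 : 0 < Num.sqrt su2 by rewrite sqrtr_gt0.
rewrite sqrtrM ?ltW // -[in RHS](sqr_sqrtr (ltW su0)).
by field; rewrite !gt_eqF.
Qed.

Lemma corr_ratio_termE (R : realType) (su2 sb2 sbu : R) :
  0 < su2 -> 0 <= sb2 -> 0 < su2 + sb2 - 2 * sbu -> (sb2 = 0 -> sbu = 0) ->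
  let c := ratio_c su2 sb2 in let rho := corr_rho su2 sb2 sbu in
  `|1 - rho * c| / Num.sqrt (1 - 2 * rho * c + c ^+ 2)
  = `|su2 - sbu| / (Num.sqrt su2 * Num.sqrt (su2 + sb2 - 2 * sbu)).
Proof.
move=> su0 sb0 v0 sbu0 c rho.
set v := su2 + sb2 - 2 * sbu in v0 *.
have su_ge0 := ltW su0; have v_ge0 := ltW v0.
have rho_c : rho * c = sbu / su2 by exact: corr_rho_mul_ratio_c.
have s0 : 0 < Num.sqrt su2 by rewrite sqrtr_gt0.
have t0 : 0 < Num.sqrt v by rewrite sqrtr_gt0.
have -> : 1 - 2 * rho * c + c ^+ 2 = (Num.sqrt v / Num.sqrt su2) ^+ 2.
  rewrite -mulrA rho_c ratio_c_sqr // expr_div_n !sqr_sqrtr // /v.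
  by field; rewrite gt_eqF.
have -> : 1 - rho * c = (su2 - sbu) / Num.sqrt su2 ^+ 2.
  by rewrite rho_c sqr_sqrtr //; field; rewrite gt_eqF.
rewrite sqrtr_sqr (gtr0_norm (divr_gt0 t0 s0)) normrM normfV normrX (gtr0_norm s0).
by field; rewrite !gt_eqF.
Qed.

Theorem theorem2 (d : measure_display) (T : measurableType d) (R : realType)
  (P : probability T R) (theta0 mu : R) (tu tb : T -> R) :
  tu \in Lfun P 2%:E -> tb \in Lfun P 2%:E ->
  ('E_P[tu] = theta0%:E)%E ->
  ('E_P[tb] = (theta0 + mu)%:E)%E ->
  0 < var_r P tu ->
  0 < var_r P tu + var_r P tb - 2 * cov_r P tb tu ->
  let su2 := var_r P tu in
  let sb2 := var_r P tb in
  let sbu := cov_r P tb tu in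
  let c := ratio_c su2 sb2 in
  let rho := corr_rho su2 sb2 sbu in
  ('E_P[fun w => ((combo_est su2 sb2 sbu tu tb w - theta0) ^+ 2)%R]
    <= (su2 * (1 + 2^-1 * (`|1 - rho * c| / Num.sqrt (1 - 2 * rho * c + c ^+ 2))) ^+ 2)%:E)%E.
Proof.
move=> tu2 tb2 Etu _ su0 v0; cbv zeta.
set su2 := var_r P tu in su0 v0 *.
set sb2 := var_r P tb in v0 *.
set sbu := cov_r P tb tu in v0 *.
set v := su2 + sb2 - 2 * sbu in v0.
have /[!inE] mtu := sub_Lfun_mfun tu2.
have /[!inE] mtb := sub_Lfun_mfun tb2.
pose s := Num.sqrt su2.
pose K := `|su2 - sbu| / (2 * Num.sqrt v).
have s0 : 0 < s by rewrite sqrtr_gt0.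
have t0 : 0 < Num.sqrt v by rewrite sqrtr_gt0.
pose err w := (combo_est su2 sb2 sbu tu tb w - theta0) ^+ 2.
have err_le w : err w <= (1 + K / s) * (tu w - theta0) ^+ 2 + (K * s + K ^+ 2).
  rewrite /err combo_est_shrinkE addrAC.
  by apply: sqrrD_le_of_norm_le => //; exact: norm_shrink_le.
have m_err : measurable_fun setT err.
  apply: measurable_funX; apply: measurable_funB; last exact: measurable_cst.
  exact: measurable_combo_est.
apply: le_trans (expectation_le_variance_affine tu2 Etu m_err (fun w => sqr_ge0 _) err_le) _.
have sb0 : 0 <= sb2 := var_r_ge0 tb.
have sbu0 : sb2 = 0 -> sbu = 0 := cov_r_eq0_of_var_r_eq0 tb2 tu2.
rewrite lee_fin corr_ratio_termE // -/v.
have -> : 2^-1 * (`|su2 - sbu| / (s * Num.sqrt v)) = K / s.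
  by rewrite /K; field; rewrite !gt_eqF.
suff -> : (1 + K / s) * su2 + (K * s + K ^+ 2) = su2 * (1 + K / s) ^+ 2 by [].
have su2E : su2 = s ^+ 2 by rewrite sqr_sqrtr // ltW.
by rewrite su2E; field; rewrite gt_eqF.
Qed.
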